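(* For every qubit density matrix $\rho$, $C_g(\rho)+M_g(\rho)\le 1$. Explicitly, writing $\rho=\begin{pmatrix} a & c\\ \bar c & 1-a\end{pmatrix}$ in the computational basis, one has $C_g(\rho)=\frac12\left[1-\sqrt{1-4|c|^2}\right]$ and $M_g(\rho)=\frac12\left\{1+\sqrt{4[a(1-a)-|c|^2]}\right\}$, and equality $C_g(\rho)+M_g(\rho)=1$ holds whenever $a=1/2$ (in particular for all states $\frac{1-p}{2}\mathbb{I}_2+p|\psi_2\rangle\langle\psi_2|$, $p\in[0,1]$, $|\psi_2\rangle=(|0\rangle+|1\rangle)/\sqrt2$).
   Context: Computational basis $\{|0\rangle,|1\rangle\}$ of $\mathbb{C}^2$. Incoherent states are density matrices diagonal in this basis; $\mathcal{I}$ denotes their set. The fidelity is $F(\rho,\sigma)=\left(\mathrm{Tr}\sqrt{\sqrt{\sigma}\rho\sqrt{\sigma}}\right)^2$. The geometric coherence is $C_g(\rho)=1-\max_{\sigma\in\mathcal{I}}F(\rho,\sigma)$. The geometric mixedness of a $d$-dimensional state is $M_g(\rho)=F(\rho,\mathbb{I}/d)=\frac1d\left(\mathrm{Tr}\sqrt{\rho}\right)^2$ (here $d=2$). *)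

(* MathComp (ssreflect), over an arbitrary numClosedFieldType C
   (the algebraic analogue of the complex numbers, with conjugation ^* and
   the partial order in which 0 <= x means x is real and nonnegative). *)
From HB Require Import structures.
From mathcomp Require Import all_boot all_order all_algebra.
From Stdlib Require Import ClassicalEpsilon.
Set Implicit Arguments. Unset Strict Implicit. Unset Printing Implicit Defensive.
Import Order.TTheory GRing.Theory Num.Theory.
Local Open Scope ring_scope.

Section QInfo.
Variable C : numClosedFieldType.

Definition adjmx m n (M : 'M[C]_(m, n)) : 'M[C]_(n, m) := (map_mx Num.conj M)^T.

Definition hermitian n (M : 'M[C]_n) : Prop := adjmx M = M.

Definition psd n (M : 'M[C]_n) : Prop :=
  hermitian M /\ forall v : 'cV[C]_n, 0 <= (adjmx v *m M *m v) 0 0.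

Definition density n (rho : 'M[C]_n) : Prop := psd rho /\ \tr rho = 1.

Definition incoherent n (sigma : 'M[C]_n) : Prop :=
  density sigma /\ forall i j : 'I_n, i != j -> sigma i j = 0.

Definition psd_sqrt n (A : 'M[C]_n) : 'M[C]_n :=
  epsilon (inhabits 0) (fun S => psd S /\ S *m S = A).

Definition fidelity n (rho sigma : 'M[C]_n) : C :=
  (\tr (psd_sqrt (psd_sqrt sigma *m rho *m psd_sqrt sigma))) ^+ 2.

Definition max_incoherent_fidelity n (rho : 'M[C]_n) : C :=
  epsilon (inhabits 0)
    (fun m => (exists sigma, incoherent sigma /\ fidelity rho sigma = m) /\
              forall sigma, incoherent sigma -> fidelity rho sigma <= m).

Definition Cg n (rho : 'M[C]_n) : C := 1 - max_incoherent_fidelity rho.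

Definition Mg n (rho : 'M[C]_n) : C := fidelity rho ((n%:R)^-1)%:M.

Definition psi2 : 'cV[C]_2 := \col_(i < 2) (sqrtC 2)^-1.

Definition werner (p : C) : 'M[C]_2 :=
  ((1 - p) / 2)%:M + p *: (psi2 *m adjmx psi2).

End QInfo.

(* For a qubit every fidelity is explicit.  The positive square root of a
   2x2 psd matrix M is (M + sqrt(det M)) / sqrt(tr M + 2 sqrt(det M)), whence
   F(rho, sigma) = tr(sigma rho) + 2 sqrt(det sigma det rho).  Against the
   incoherent state diag(s, 1 - s) this is a linear form evaluated on the upper
   unit half-circle, whose maximum is given by Cauchy-Schwarz:
   max F = (1 + sqrt(1 - 4|c|^2)) / 2, while M_g = (1 + 2 sqrt(det rho)) / 2.
   As 1 - 4|c|^2 = (2a - 1)^2 + 4 det rho, monotonicity of the square root gives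
   C_g + M_g <= 1, with equality when a = 1/2. *)

From Pilot Require Import Defs.
From HB Require Import structures.
From mathcomp Require Import all_boot all_order all_algebra.
From mathcomp Require Import ring.
From Stdlib Require Import ClassicalEpsilon.
Set Implicit Arguments. Unset Strict Implicit. Unset Printing Implicit Defensive.
Import Order.TTheory GRing.Theory Num.Theory.
Local Open Scope ring_scope.

Section Hermitian.
Variable C : numClosedFieldType.

Lemma adjmx_mul m n p (A : 'M[C]_(m, n)) (B : 'M[C]_(n, p)) :
  adjmx (A *m B) = adjmx B *m adjmx A.
Proof. by rewrite /adjmx map_mxM trmx_mul. Qed.

Lemma hermitian_conj n (A : 'M[C]_n) (i j : 'I_n) :
  Defs.hermitian A -> A j i = (A i j)^*.
Proof. by move=> hA; rewrite -{1}hA !mxE. Qed.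

Lemma psd_conj_hermitian n (A rho : 'M[C]_n) :
  Defs.hermitian A -> psd rho -> psd (A *m rho *m A).
Proof.
move=> hA [hrho qrho]; split; first by rewrite /Defs.hermitian !adjmx_mul hA hrho mulmxA.
by move=> v; have := qrho (A *m v); rewrite adjmx_mul hA !mulmxA.
Qed.

Lemma psd_scale_shift n (M : 'M[C]_n) (s t : C) :
  psd M -> 0 <= s -> 0 <= t -> psd (s *: (M + t%:M)).
Proof.
move=> [hM qM] s0 t0; split.
  apply/matrixP=> i j; rewrite !mxE rmorphM rmorphD rmorphMn /=.
  by rewrite (geC0_conj s0) (geC0_conj t0) (hermitian_conj _ _ hM) conjCK eq_sym.
move=> v; have qv := qM v.
have nv : 0 <= (adjmx v *m v) 0 0.
  by rewrite mxE; apply: sumr_ge0 => i _; rewrite !mxE mulrC mul_conjC_ge0.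
rewrite -(scalemxAr s (adjmx v)) -scalemxAl mulmxDr mulmxDl mul_mx_scalar -scalemxAl.
move: (adjmx v *m M *m v) (adjmx v *m v) qv nv => X Y X0 Y0.
by rewrite !mxE mulr_ge0 // addr_ge0 // mulr_ge0.
Qed.

Lemma psd_sqrtP n (M : 'M[C]_n) : (exists S, psd S /\ S *m S = M) ->
  psd (psd_sqrt M) /\ psd_sqrt M *m psd_sqrt M = M.
Proof. exact: epsilon_spec. Qed.

Lemma max_incoherent_fidelity_eq n (rho : 'M[C]_n) (m : C) :
  (exists sigma, incoherent sigma /\ fidelity rho sigma = m) ->
  (forall sigma, incoherent sigma -> fidelity rho sigma <= m) ->
  max_incoherent_fidelity rho = m.
Proof.
move=> attained bounded; rewrite /max_incoherent_fidelity.
match goal with |- epsilon _ ?P = _ =>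
  have [[sigma [inc_sigma <-]] le_max] :=
    epsilon_spec (inhabits 0) P (ex_intro P m (conj attained bounded)) end.
apply/eqP; rewrite eq_le bounded //=.
by have [sigma' [inc_sigma' <-]] := attained; apply: le_max.
Qed.

End Hermitian.

Section Qubit.
Variable C : numClosedFieldType.
Implicit Types (M S rho sigma : 'M[C]_2) (x y s : C).

Lemma sum_ord2 (F : 'I_2 -> C) : \sum_i F i = F 0 + F 1.
Proof. by rewrite big_ord_recl big_ord1; congr (_ + F _); apply: val_inj. Qed.

Lemma mulmx2E M S i j : (M *m S) i j = M i 0 * S 0 j + M i 1 * S 1 j.
Proof. by rewrite mxE sum_ord2. Qed.

Lemma mxtrace2 M : \tr M = M 0 0 + M 1 1.
Proof. by rewrite /mxtrace sum_ord2. Qed.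

Lemma det_mx2 M : \det M = M 0 0 * M 1 1 - M 0 1 * M 1 0.
Proof.
rewrite (expand_det_row _ 0) sum_ord2 /cofactor !det_mx11 !mxE /= expr0 expr1.
have -> : lift 0 (0 : 'I_1) = 1 :> 'I_2 by apply: val_inj.
have -> : lift 1 (0 : 'I_1) = 0 :> 'I_2 by apply: val_inj.
by rewrite !mul1r mulN1r mulrN.
Qed.

Lemma ord2P (i : 'I_2) : i = 0 \/ i = 1.
Proof. by case: i => [[|[|]]] // ?; [left | right]; apply: val_inj. Qed.

Lemma matrix2P M S : M 0 0 = S 0 0 -> M 0 1 = S 0 1 ->
  M 1 0 = S 1 0 -> M 1 1 = S 1 1 -> M = S.
Proof.
move=> e00 e01 e10 e11; apply/matrixP => i j.
by case: (ord2P i) => ->; case: (ord2P j) => ->.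
Qed.

Definition col2 x y : 'cV[C]_2 := \col_i (if i == 0 then x else y).

Lemma col2_eta (v : 'cV[C]_2) : v = col2 (v 0 0) (v 1 0).
Proof. by apply/matrixP => i j; rewrite !mxE (ord1 j); case: (ord2P i) => ->. Qed.

Lemma qform2 M x y : (adjmx (col2 x y) *m M *m col2 x y) 0 0 =
  x^* * (M 0 0 * x + M 0 1 * y) + y^* * (M 1 0 * x + M 1 1 * y).
Proof. by rewrite !mxE !sum_ord2 !mxE !sum_ord2 !mxE /=; ring. Qed.

Lemma psd2_qform_ge0 M x y (r : C) : psd M ->
  x^* * (M 0 0 * x + M 0 1 * y) + y^* * (M 1 0 * x + M 1 1 * y) = r -> 0 <= r.
Proof. by move=> [_ qM] <-; rewrite -qform2 qM. Qed.
Arguments psd2_qform_ge0 [M] x y [r].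

Lemma psd2P M : psd M ->
  [/\ 0 <= M 0 0, 0 <= M 1 1, M 1 0 = (M 0 1)^* & 0 <= \det M].
Proof.
move=> hM; have M10 : M 1 0 = (M 0 1)^* by apply: hermitian_conj; case: hM.
have M00 : 0 <= M 0 0 by apply: (psd2_qform_ge0 1 0 hM); rewrite conjC0 conjC1; ring.
have M11 : 0 <= M 1 1 by apply: (psd2_qform_ge0 0 1 hM); rewrite conjC0 conjC1; ring.
split => //; rewrite det_mx2 M10.
move: M00; rewrite le0r => /orP[/eqP M00_0 | M00_gt0].
  have : 0 <= - ((M 1 1 + 2) * (M 0 1 * (M 0 1)^*)).
    apply: (psd2_qform_ge0 (M 1 1 + 1) (- (M 0 1)^*) hM).
    by rewrite M10 M00_0 rmorphN /= conjCK rmorphD /= conjC1 (geC0_conj M11); ring.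
  rewrite oppr_ge0 pmulr_rle0 ?ltr_wpDl ?ltr0n // => M01_le0.
  have -> : M 0 1 * (M 0 1)^* = 0 by apply/eqP; rewrite eq_le M01_le0 mul_conjC_ge0.
  by rewrite M00_0 mul0r subrr.
have : 0 <= M 0 0 * (M 0 0 * M 1 1 - M 0 1 * (M 0 1)^*).
  apply: (psd2_qform_ge0 (- M 0 1) (M 0 0) hM).
  by rewrite M10 rmorphN /= (geC0_conj (ltW M00_gt0)); ring.
by rewrite pmulr_rge0.
Qed.

(* Cayley-Hamilton: [M^2 = tr M * M - det M]. *)
Lemma sqr_mx2_add_scalar M t : t ^+ 2 = \det M ->
  (M + t%:M) *m (M + t%:M) = (\tr M + 2 * t) *: M.
Proof.
rewrite det_mx2 mxtrace2 => tt.
by apply: matrix2P; rewrite !mulmx2E !mxE /=; ring: tt.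
Qed.

Lemma psd2_trace0 M : psd M -> \tr M = 0 -> M = 0.
Proof.
move=> hM; have [M00 M11 M10 detM] := psd2P hM.
rewrite mxtrace2 => /eqP; rewrite paddr_eq0 // => /andP[/eqP M00_0 /eqP M11_0].
move: detM; rewrite det_mx2 M00_0 M11_0 M10 mul0r sub0r oppr_ge0 => M01_le0.
have /eqP : M 0 1 * (M 0 1)^* = 0 by apply/eqP; rewrite eq_le M01_le0 mul_conjC_ge0.
rewrite mul_conjC_eq0 => /eqP M01_0.
by apply: matrix2P; rewrite ?mxE ?M00_0 ?M11_0 ?M10 ?M01_0 ?conjC0.
Qed.

Lemma psd2_sqrt_exists M : psd M -> exists S, psd S /\ S *m S = M.
Proof.
move=> hM; have [M00 M11 _ detM] := psd2P hM.
pose t := sqrtC (\det M); pose k := sqrtC (\tr M + 2 * t).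
have t_ge0 : 0 <= t by rewrite sqrtC_ge0.
have trM_ge0 : 0 <= \tr M by rewrite mxtrace2 addr_ge0.
exists (k^-1 *: (M + t%:M)); split.
  by apply: psd_scale_shift; rewrite // invr_ge0 sqrtC_ge0 addr_ge0 // mulr_ge0 ?ler0n.
rewrite -scalemxAl -scalemxAr scalerA sqr_mx2_add_scalar ?sqrtCK // scalerA.
have [k0 | k_neq0] := eqVneq k 0.
  move/eqP: k0; rewrite sqrtC_eq0 paddr_eq0 ?mulr_ge0 ?ler0n // => /andP[/eqP trM0 _].
  by rewrite (psd2_trace0 hM trM0) scaler0.
by rewrite -[\tr M + 2 * t]sqrtCK -/k -expr2 exprVn mulVf ?expf_neq0 // scale1r.
Qed.

Lemma sqr_mxtrace2_psd S : psd S ->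
  (\tr S) ^+ 2 = \tr (S *m S) + 2 * sqrtC (\det (S *m S)).
Proof.
move=> hS; have [_ _ _ detS] := psd2P hS.
rewrite det_mulmx -expr2 sqrCK // !mxtrace2 !mulmx2E det_mx2; ring.
Qed.

Lemma fidelity2 rho sigma : psd rho -> psd sigma ->
  fidelity rho sigma = \tr (sigma *m rho) + 2 * sqrtC (\det sigma * \det rho).
Proof.
move=> hrho hsigma; rewrite /fidelity.
have [hR RR] := psd_sqrtP (psd2_sqrt_exists hsigma).
move: (psd_sqrt sigma) hR RR => R hR RR.
have [hS SS] := psd_sqrtP (psd2_sqrt_exists (psd_conj_hermitian hR.1 hrho)).
rewrite sqr_mxtrace2_psd // SS mxtrace_mulC mulmxA RR.
by congr (_ + 2 * sqrtC _); rewrite -RR !det_mulmx; ring.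
Qed.

Lemma psd2_qform M : 0 <= M 0 0 -> 0 <= M 1 1 -> M 1 0 = (M 0 1)^* ->
  (forall x y, 0 <= x^* * (M 0 0 * x + M 0 1 * y) + y^* * (M 1 0 * x + M 1 1 * y)) ->
  psd M.
Proof.
move=> M00 M11 M10 qM; split; last by move=> v; rewrite [v]col2_eta qform2.
by apply: matrix2P; rewrite !mxE ?M10 ?conjCK // geC0_conj.
Qed.

Lemma density2P rho : density rho ->
  [/\ 0 <= rho 0 0 <= 1, rho 1 1 = 1 - rho 0 0, rho 1 0 = (rho 0 1)^* & 0 <= \det rho].
Proof.
move=> [hrho tr1]; have [r00 r11 r10 detr] := psd2P hrho.
have e11 : rho 1 1 = 1 - rho 0 0 by rewrite -tr1 mxtrace2 addrAC subrr add0r.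
by split; rewrite // r00 -subr_ge0 -e11.
Qed.

Lemma det_density2 rho : density rho ->
  \det rho = rho 0 0 * (1 - rho 0 0) - `|rho 0 1| ^+ 2.
Proof. by case/density2P => _ r11 r10 _; rewrite det_mx2 r11 r10 normCK. Qed.

Definition qdiag s : 'M[C]_2 :=
  \matrix_(i, j) ((i == j)%:R * (if i == 0 then s else 1 - s)).

Lemma incoherent_qdiag s : 0 <= s <= 1 -> incoherent (qdiag s).
Proof.
case/andP=> s0 s1; have s1' : 0 <= 1 - s by rewrite subr_ge0.
split; last by move=> i j /negbTE ij; rewrite mxE ij mul0r.
split; last by rewrite mxtrace2 !mxE /= !mul1r addrC subrK.
apply: psd2_qform; rewrite ?mxE /= ?mul1r ?mul0r ?conjC0 // => x y.
rewrite !(mul0r, mulr0, addr0, add0r) mulrCA [y^* * _]mulrCA.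
by rewrite addr_ge0 // mulr_ge0 // mulrC mul_conjC_ge0.
Qed.

Lemma incoherent2P sigma : incoherent sigma ->
  sigma = qdiag (sigma 0 0) /\ 0 <= sigma 0 0 <= 1.
Proof.
move=> [hsigma offdiag]; have [s01 s11 _ _] := density2P hsigma.
split=> //; apply: matrix2P; rewrite !mxE /= ?mul1r ?mul0r ?s11 //; exact: offdiag.
Qed.

Lemma fidelity_qdiag rho s : density rho -> 0 <= s <= 1 ->
  fidelity rho (qdiag s) = s * rho 0 0 + (1 - s) * (1 - rho 0 0) +
                           2 * sqrtC (s * (1 - s)) * sqrtC (\det rho).
Proof.
move=> hrho hs; have [_ r11 _ detr] := density2P hrho.
have [[hsigma _] _] := incoherent_qdiag hs.
have /andP[s0 s1] := hs.
have det_q : \det (qdiag s) = s * (1 - s) by rewrite det_mx2 !mxE /=; ring.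
rewrite fidelity2 //; last by case: hrho.
rewrite det_q [sqrtC (_ * \det rho)]sqrtCM ?nnegrE ?mulr_ge0 ?subr_ge0 //.
by rewrite mxtrace2 !mulmx2E !mxE /= r11; ring.
Qed.

Lemma cauchy_schwarz2 (al be X Y : C) :
  al \is Num.real -> be \is Num.real -> X \is Num.real -> Y \is Num.real ->
  al ^+ 2 + be ^+ 2 = 1 -> al * X + be * Y <= sqrtC (X ^+ 2 + Y ^+ 2).
Proof.
move=> ral rbe rX rY circle.
have rZ : al * X + be * Y \is Num.real by rewrite rpredD ?rpredM.
have rW : al * Y - be * X \is Num.real by rewrite rpredB ?rpredM.
have lagrange : X ^+ 2 + Y ^+ 2 = (al * X + be * Y) ^+ 2 + (al * Y - be * X) ^+ 2.
  by rewrite -[X ^+ 2 + Y ^+ 2]mul1r -circle; ring.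
rewrite (le_trans (real_ler_norm rZ)) // -(sqrCK (normr_ge0 _)) real_normK //.
rewrite lagrange ler_sqrtC ?nnegrE ?addr_ge0 -?realEsqr //.
by rewrite lerDl -realEsqr.
Qed.

Lemma cauchy_schwarz2_eq (X Y : C) : X \is Num.real -> 0 <= Y ->
  exists al be, [/\ al \is Num.real, 0 <= be, al ^+ 2 + be ^+ 2 = 1
                  & al * X + be * Y = sqrtC (X ^+ 2 + Y ^+ 2)].
Proof.
move=> rX Y0; have X2 : 0 <= X ^+ 2 by rewrite -realEsqr.
have Y2 : 0 <= Y ^+ 2 by rewrite -realEsqr ger0_real.
have [T0 | T_neq0] := eqVneq (X ^+ 2 + Y ^+ 2) 0.
  move/eqP: (T0); rewrite paddr_eq0 // !expf_eq0 /= => /andP[/eqP X0 /eqP Y0'].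
  exists 1, 0; rewrite T0 X0 Y0' sqrtC0 rpred1 lexx; split=> //; ring.
set r := sqrtC (X ^+ 2 + Y ^+ 2).
have r_gt0 : 0 < r by rewrite sqrtC_gt0 lt_def T_neq0 addr_ge0.
have r_neq0 : r != 0 by rewrite gt_eqF.
have rr : r ^+ 2 = X ^+ 2 + Y ^+ 2 by rewrite sqrtCK.
exists (X / r), (Y / r); split.
- by rewrite rpredM // rpredV ger0_real // ltW.
- exact: divr_ge0 Y0 (ltW r_gt0).
- by rewrite !expr_div_n -mulrDl -rr divff // expf_neq0.
- by rewrite -[r in RHS](mulfK r_neq0) -expr2 rr; field.
Qed.

Lemma half_circle_param (al be : C) :
  al \is Num.real -> 0 <= be -> al ^+ 2 + be ^+ 2 = 1 ->
  let s := 2^-1 * (1 + al) in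
  [/\ 0 <= s <= 1, 2 * s - 1 = al & 2 * sqrtC (s * (1 - s)) = be].
Proof.
move=> ral be0 circle s.
have : `|al| <= 1.
  by rewrite -(@expr_le1 _ 2) // real_normK // -circle lerDl -realEsqr ger0_real.
rewrite real_ler_norml // => /andP[al_ge al_le].
have one_s : 1 - s = 2^-1 * (1 - al) by rewrite /s; field.
have be2 : be ^+ 2 = 1 - al ^+ 2 by rewrite -circle addrC addKr.
split.
- apply/andP; split; last by rewrite -subr_ge0 one_s mulr_ge0 ?invr_ge0 ?ler0n ?subr_ge0.
  by rewrite /s mulr_ge0 ?invr_ge0 ?ler0n // -[1]opprK addrC subr_ge0.
- by rewrite /s; field.
- have -> : s * (1 - s) = (be / 2) ^+ 2 by rewrite one_s /s; field: be2.
  by rewrite sqrCK ?divr_ge0 ?ler0n // mulrC divfK ?pnatr_eq0.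
Qed.

Lemma max_incoherent_fidelity2 rho : density rho ->
  max_incoherent_fidelity rho = 2^-1 * (1 + sqrtC (1 - 4 * `|rho 0 1| ^+ 2)).
Proof.
move=> hrho; have [/andP[a0 _] _ _ detr] := density2P hrho.
set X := 2 * rho 0 0 - 1; set Y := 2 * sqrtC (\det rho).
have rX : X \is Num.real by rewrite rpredB ?rpredM ?rpred_nat ?ger0_real.
have Y0 : 0 <= Y by rewrite mulr_ge0 ?ler0n ?sqrtC_ge0.
have -> : 1 - 4 * `|rho 0 1| ^+ 2 = X ^+ 2 + Y ^+ 2.
  by rewrite /X /Y exprMn sqrtCK det_density2 //; ring.
have F_circle s : 0 <= s <= 1 -> fidelity rho (qdiag s) =
    2^-1 * (1 + ((2 * s - 1) * X + 2 * sqrtC (s * (1 - s)) * Y)).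
  by move=> hs; rewrite fidelity_qdiag // /X /Y; field.
apply: max_incoherent_fidelity_eq.
  have [al [be [ral be0 circle <-]]] := cauchy_schwarz2_eq rX Y0.
  have [hs s_al s_be] := half_circle_param ral be0 circle.
  exists (qdiag (2^-1 * (1 + al))).
  by rewrite F_circle // s_al s_be; split=> //; apply: incoherent_qdiag.
move=> sigma /incoherent2P[sigmaE hs]; have /andP[s0 s1] := hs.
rewrite sigmaE (F_circle _ hs) ler_pM2l ?invr_gt0 ?ltr0n // lerD2l.
apply: (cauchy_schwarz2 _ _ rX (ger0_real Y0)).
- by rewrite rpredB ?rpredM ?rpred_nat ?rpred1 ?ger0_real.
- by rewrite rpredM ?rpred_nat ?sqrtC_real ?mulr_ge0 ?subr_ge0.
- by rewrite exprMn sqrtCK; ring.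
Qed.

Lemma Mg2 rho : density rho -> Mg rho = 2^-1 * (1 + sqrtC (4 * \det rho)).
Proof.
move=> hrho; have [_ _ _ detr] := density2P hrho.
have one_half : 1 - 2^-1 = 2^-1 :> C by field.
have half01 : 0 <= (2^-1 : C) <= 1.
  by rewrite invr_ge0 ler0n -subr_ge0 one_half invr_ge0 ler0n.
have sqrt4 : sqrtC 4 = 2 :> C by rewrite -(sqrCK (ler0n _ 2)) -natrX.
rewrite /Mg; have -> : (2^-1)%:M = qdiag 2^-1.
  by apply: matrix2P; rewrite !mxE /= ?mul1r ?mul0r ?one_half.
rewrite fidelity_qdiag // one_half -expr2 sqrCK ?invr_ge0 ?ler0n //.
by rewrite sqrtCM ?nnegrE ?ler0n // sqrt4; field.
Qed.

Lemma Cg_add_Mg2 rho : density rho -> Cg rho + Mg rho =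
  1 - 2^-1 * (sqrtC ((2 * rho 0 0 - 1) ^+ 2 + 4 * \det rho) - sqrtC (4 * \det rho)).
Proof.
move=> hrho; rewrite /Cg max_incoherent_fidelity2 // Mg2 //.
have -> : 1 - 4 * `|rho 0 1| ^+ 2 = (2 * rho 0 0 - 1) ^+ 2 + 4 * \det rho.
  by rewrite det_density2 //; ring.
by field.
Qed.

Lemma Cg_add_Mg_le1 rho : density rho -> Cg rho + Mg rho <= 1.
Proof.
move=> hrho; have [/andP[a0 _] _ _ detr] := density2P hrho.
have sq_ge0 : 0 <= (2 * rho 0 0 - 1) ^+ 2.
  by rewrite -realEsqr rpredB ?rpredM ?rpred_nat ?rpred1 ?ger0_real.
have D_ge0 : 0 <= 4 * \det rho by rewrite mulr_ge0 ?ler0n.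
rewrite Cg_add_Mg2 // gerBl mulr_ge0 ?invr_ge0 ?ler0n // subr_ge0.
by rewrite ler_sqrtC ?nnegrE ?addr_ge0 // lerDr.
Qed.

Lemma Cg_add_Mg_eq1 rho : density rho -> rho 0 0 = 2^-1 -> Cg rho + Mg rho = 1.
Proof.
move=> hrho a_half; rewrite Cg_add_Mg2 // a_half.
by rewrite (_ : 2 * 2^-1 - 1 = 0 :> C) ?expr0n ?add0r ?subrr ?mulr0 ?subr0 //; field.
Qed.

Lemma wernerE (p : C) (i j : 'I_2) :
  werner p i j = if i == j then (2^-1 : C) else p / 2.
Proof.
have r_ge0 : 0 <= (sqrtC 2)^-1 :> C by rewrite invr_ge0 sqrtC_ge0 ler0n.
rewrite /werner !mxE big_ord1 !mxE (geC0_conj r_ge0) -expr2 exprVn sqrtCK.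
by case: (i == j); rewrite ?mulr1n ?mulr0n ?add0r //; field.
Qed.

Lemma density_werner (p : C) : 0 <= p <= 1 -> density (werner p).
Proof.
case/andP=> p0 p1; split; last by rewrite mxtrace2 !wernerE /=; field.
apply: psd2_qform.
- by rewrite wernerE eqxx invr_ge0 ler0n.
- by rewrite wernerE eqxx invr_ge0 ler0n.
- by rewrite !wernerE /= geC0_conj // divr_ge0 ?ler0n.
move=> x y; rewrite !wernerE /=.
have -> : x^* * (2^-1 * x + p / 2 * y) + y^* * (p / 2 * x + 2^-1 * y) =
    (1 - p) / 2 * (x * x^* + y * y^*) + p / 2 * ((x + y) * (x + y)^*).
  by rewrite rmorphD /=; field.
by apply: addr_ge0; apply: mulr_ge0; rewrite ?divr_ge0 ?subr_ge0 ?ler0n ?addr_ge0 ?mul_conjC_ge0.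
Qed.

End Qubit.

Theorem mainTheorem4 (C : numClosedFieldType) :
  (forall rho : 'M[C]_2, density rho ->
     let a := rho ord0 ord0 in
     let c := rho ord0 ord_max in
     [/\ Cg rho + Mg rho <= 1,
         Cg rho = 2^-1 * (1 - sqrtC (1 - 4 * `|c| ^+ 2)),
         Mg rho = 2^-1 * (1 + sqrtC (4 * (a * (1 - a) - `|c| ^+ 2)))
       & a = 2^-1 -> Cg rho + Mg rho = 1]) /\
  (forall p : C, 0 <= p <= 1 -> Cg (werner p) + Mg (werner p) = 1).
Proof.
split=> [rho hrho a c | p hp].
  have -> : c = rho 0 1 by rewrite /c; congr (rho _ _); apply: val_inj.
  split; [exact: Cg_add_Mg_le1 | | | exact: Cg_add_Mg_eq1].
    by rewrite /Cg max_incoherent_fidelity2 //; field.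
  by rewrite Mg2 // det_density2.
by apply: Cg_add_Mg_eq1; [exact: density_werner | rewrite wernerE].
Qed.
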